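(* Let $P=(A_1,\dots,A_n)$ be a cyclic $n$-gon (distinct vertices on a circle) with vertices ordered anticlockwise, and take all indices modulo $n$ in $\{1,\dots,n\}$. Let $m$ be an integer with $2\le m\le n-1$, and let $q,r\in\{1,\dots,n\}$ be such that $q,q+1,\dots,q+m-2,r,r+1$ are pairwise distinct. Write $I=\{q,q+1,\dots,q+m-2\}$. Then \[ S_{q,r,r+1}\prod_{k=q+1}^{q+m-2} x_{k,r+1} = \sum_{t=0}^{m-3} S_{q+t,\,q+t+1,\,r+1}\; x_{r,r+1}\!\!\prod_{k\in I\setminus\{q+t,q+t+1\}}\!\! x_{k,r+1} \;+\; S_{q+m-2,\,r,\,r+1}\prod_{k=q}^{q+m-3} x_{k,r+1}. \]
   Context: For points $A_p=(x_p,y_p)$, $x_{pq}:=(x_q-x_p)^2+(y_q-y_p)^2$ is the squared distance between $A_p$ and $A_q$, and $S_{pqr}:=2[(x_q-x_p)(y_r-y_p)-(y_q-y_p)(x_r-x_p)]$ is four times the signed area of triangle $A_pA_qA_r$; these are the entries of the polygonal Heronian frieze of $P$. Empty sums equal $0$ and empty products equal $1$. *)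

From mathcomp Require Import all_boot all_order all_algebra.
From mathcomp Require Import all_classical all_reals all_analysis.
Set Implicit Arguments. Unset Strict Implicit. Unset Printing Implicit Defensive.
Import Order.TTheory GRing.Theory Num.Theory.
Local Open Scope ring_scope.

Definition sqdist {R : realType} (p q : R * R) : R :=
  (q.1 - p.1) ^+ 2 + (q.2 - p.2) ^+ 2.

(* four times the signed area of the triangle p q r *)
Definition S4 {R : realType} (p q r : R * R) : R :=
  2 * ((q.1 - p.1) * (r.2 - p.2) - (q.2 - p.2) * (r.1 - p.1)).

(* The polygon vertices A_1..A_n are stored 0-based as A 0, ..., A (n-1);
   an index k : nat denotes the vertex A (k %% n)%N (indices modulo n). *)
Definition xx {R : realType} (n : nat) (A : nat -> R * R) (k l : nat) : R :=
  sqdist (A ((k %% n)%N)) (A ((l %% n)%N)).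

Definition SS {R : realType} (n : nat) (A : nat -> R * R) (k l j : nat) : R :=
  S4 (A ((k %% n)%N)) (A ((l %% n)%N)) (A (j %% n)%N).

Definition cyclic_anticlockwise {R : realType} (n : nat) (A : nat -> R * R) : Prop :=
  exists (c : R * R) (rho : R) (th : nat -> R),
    0 < rho /\
    (forall i j, (i < j < n)%N -> th i < th j) /\
    th n.-1 < th 0%N + 2 * pi /\
    (forall i, (i < n)%N ->
        A i = (c.1 + rho * cos (th i), c.2 + rho * sin (th i))).

(* On a circle with centre c, any four points satisfy the Ptolemy-type relation
   S_PYW x_QW = S_PQW x_YW + S_QYW x_PW: the defect is a combination of the
   differences of the squared distances to c.  Taking W = A_(r+1), Y = A_r and
   multiplying the relations for consecutive P = A_k, Q = A_(k+1) by the
   remaining factors x_(k,r+1) telescopes into the formula. *)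

From mathcomp Require Import all_boot all_order all_algebra.
From mathcomp Require Import all_classical all_reals all_analysis.
From mathcomp Require Import ring zify.
Set Implicit Arguments. Unset Strict Implicit. Unset Printing Implicit Defensive.
Import Order.TTheory GRing.Theory Num.Theory.
Local Open Scope ring_scope.

Lemma S4_sqdist_concyclic (R : realType) (c P Q Y W : R * R) (s : R) :
  sqdist c P = s -> sqdist c Q = s -> sqdist c Y = s -> sqdist c W = s ->
  S4 P Y W * sqdist Q W = S4 P Q W * sqdist Y W + S4 Q Y W * sqdist P W.
Proof.
move=> cP cQ cY cW.
have ptolemy_defect :
    S4 P Y W * sqdist Q W - (S4 P Q W * sqdist Y W + S4 Q Y W * sqdist P W)
    = S4 W Q Y * (sqdist c W - sqdist c P) + S4 W P Q * (sqdist c W - sqdist c Y)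
      + S4 W P Y * (sqdist c Q - sqdist c W).
  by case: P Q Y W c {cP cQ cY cW} => [? ?] [? ?] [? ?] [? ?] [? ?];
     rewrite /S4 /sqdist /=; ring.
by apply/eqP; rewrite -subr_eq0 ptolemy_defect cP cQ cY cW !subrr !mulr0 !addr0.
Qed.

Lemma sqdist_polar (R : realType) (c : R * R) (rho th : R) :
  sqdist c (c.1 + rho * cos th, c.2 + rho * sin th) = rho ^+ 2.
Proof. by rewrite /sqdist /= ![_ + _ - _]addrC !addKr !exprMn -mulrDr cos2Dsin2 mulr1. Qed.

Lemma big_nat_recr_cond (R : Type) (idx : R) (op : Monoid.law idx)
    m n (P : pred nat) (F : nat -> R) : (m <= n)%N ->
  \big[op/idx]_(m <= k < n.+1 | P k) F k
  = op (\big[op/idx]_(m <= k < n | P k) F k) (if P n then F n else idx).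
Proof. by move=> le_mn; rewrite !(big_mkcond P) big_nat_recr. Qed.

Section TelescopingProduct.

Variables (R : comPzSemiRingType) (x : nat -> R).

Lemma prod_but2_recr (q j t : nat) : (t < j)%N ->
  \prod_(q <= k < q + j.+2 | (k != q + t)%N && (k != (q + t).+1)%N) x k
  = \prod_(q <= k < q + j.+1 | (k != q + t)%N && (k != (q + t).+1)%N) x k
    * x (q + j.+1)%N.
Proof.
move=> lt_tj; rewrite addnS big_nat_recr_cond ?leq_addr //.
by rewrite ifT //; apply/andP; split; apply/eqP; lia.
Qed.

Lemma prod_but_last2 (q j : nat) :
  \prod_(q <= k < q + j.+2 | (k != q + j)%N && (k != (q + j).+1)%N) x k
  = \prod_(q <= k < q + j) x k.
Proof.
rewrite !addnS !big_nat_recr_cond ?leqW ?leq_addr //= !eqxx andbF /= !mulr1.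
rewrite big_nat_cond [RHS]big_nat_cond; apply: eq_bigl => k.
rewrite andbT; apply/andP/idP => [[] // | k_in]; split => //.
by case/andP: k_in => *; apply/andP; split; apply/eqP; lia.
Qed.

Variables (S : nat -> nat -> R) (T : nat -> R) (xr : R).
Hypothesis three_term : forall a b, T a * x b = S a b * xr + T b * x a.

Lemma telescoping_prod (q j : nat) :
  T q * \prod_(q.+1 <= k < q + j.+1) x k
  = \sum_(0 <= t < j) S (q + t)%N (q + t).+1 * xr *
       \prod_(q <= k < q + j.+1 | (k != q + t)%N && (k != (q + t).+1)%N) x k
    + T (q + j)%N * \prod_(q <= k < q + j) x k.
Proof.
elim: j => [|j IH]; first by rewrite !big_geq ?addn0 ?addn1 // add0r.
rewrite [in LHS]addnS big_nat_recr /= ?addnS ?ltnS ?leq_addr // -!addnS.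
rewrite mulrA IH mulrDl big_distrl /= big_nat_recr //= prod_but_last2 -addrA.
congr (_ + _).
  by apply: eq_big_nat => t /andP [_ lt_tj]; rewrite prod_but2_recr // mulrA.
rewrite [in RHS]addnS big_nat_recr ?leq_addr //= [LHS]mulrAC addnS three_term.
by rewrite mulrDl mulrA [T _ * _ * _]mulrAC.
Qed.

End TelescopingProduct.

Theorem corollary2p10 (R : realType) (n : nat) (A : nat -> R * R)
    (m q r : nat) :
  cyclic_anticlockwise n A ->
  (2 <= m)%N -> (m <= n.-1)%N ->
  (q < n)%N -> (r < n)%N ->
  uniq [seq (i %% n)%N | i <- iota q m.-1 ++ [:: r; r.+1]] ->
  SS n A q r r.+1 * \prod_(q.+1 <= k < q + m.-1) xx n A k r.+1
  = \sum_(0 <= t < m - 2)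
       SS n A (q + t) (q + t).+1 r.+1 * xx n A r r.+1 *
       \prod_(q <= k < q + m.-1 | (k != q + t)%N && (k != (q + t).+1)%N)
          xx n A k r.+1
    + SS n A (q + m - 2) r r.+1 * \prod_(q <= k < q + m - 2) xx n A k r.+1.
Proof.
move=> [c [rho [th [_ [_ [_ A_polar]]]]]] m_ge2 m_le _ _ _.
have on_circle k : sqdist c (A (k %% n)%N) = rho ^+ 2.
  by rewrite A_polar ?sqdist_polar // ltn_pmod //; lia.
have three_term a b : SS n A a r r.+1 * xx n A b r.+1
    = SS n A a b r.+1 * xx n A r r.+1 + SS n A b r r.+1 * xx n A a r.+1.
  exact: S4_sqdist_concyclic (on_circle a) (on_circle b) (on_circle r) (on_circle r.+1).
have := telescoping_prod three_term q (m - 2).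
have -> : (m - 2).+1 = m.-1 by lia.
by rewrite addnBA.
Qed.
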